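(* Let $f,g_1,\dots,g_m,h_1,\dots,h_l\in\mathbb{R}[\mathbf{x}]$ and suppose the following holds: there is a nonnegative integer $r\le m/2$, reals $\overline R_i>\underline R_i>0$ and sets $T_i\subseteq[n]$ for $i\in[r]$, and reals $\overline R_j>0$ and sets $T_j\subseteq[n]$ for $j\in[m]\setminus[2r]$, such that (1) $(\bigcup_{i\in[r]}T_i)\cup(\bigcup_{j\in[m]\setminus[2r]}T_j)=[n]$; (2) $g_i=\|\mathbf{x}(T_i)\|_2^2-\underline R_i$ and $g_{i+r}=\overline R_i-\|\mathbf{x}(T_i)\|_2^2$ for $i\in[r]$; (3) $g_j=\overline R_j-\|\mathbf{x}(T_j)\|_2^2$ for $j\in[m]\setminus[2r]$. Then the linear program $(\mathrm{LP}_k)$ has a feasible solution for every integer $k\ge k_{\min}$, and therefore the POP of minimizing $f$ over $S(g)\cap V(h)$ has the constant trace property.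
   Context: $\mathbf{x}=(x_1,\dots,x_n)$, and for $T\subseteq[n]$, $\mathbf{x}(T)=(x_t)_{t\in T}$. $\lceil p\rceil:=\lceil\deg(p)/2\rceil$; $\mathbb{N}^n_d:=\{\alpha\in\mathbb{N}^n:|\alpha|\le d\}$; $s(d):=\binom{n+d}{n}$; $\mathbf{v}_d=(\mathbf{x}^\alpha)_{\alpha\in\mathbb{N}^n_d}$; $S(g)=\{\mathbf{x}:g_i(\mathbf{x})\ge0\ \forall i\}$, $V(h)=\{\mathbf{x}:h_j(\mathbf{x})=0\ \forall j\}$; $k_{\min}:=\max\{\lceil f\rceil,\lceil g_i\rceil,\lceil h_j\rceil\}$. $(\mathrm{LP}_k)$: minimize $\xi$ over $\xi\in\mathbb{R}$, real diagonal $\mathbf{G}_0$ of size $s(k)$, real diagonal $\mathbf{G}_i$ of size $s(k-\lceil g_i\rceil)$, vectors $\mathbf{u}_j\in\mathbb{R}^{s(2(k-\lceil h_j\rceil))}$, subject to $\mathbf{G}_i-\mathbf{I}\succeq0$ ($i\in\{0\}\cup[m]$) and the polynomial identity $\xi=\mathbf{v}_k^\top\mathbf{G}_0\mathbf{v}_k+\sum_{i\in[m]}g_i\mathbf{v}_{k-\lceil g_i\rceil}^\top\mathbf{G}_i\mathbf{v}_{k-\lceil g_i\rceil}+\sum_{j\in[l]}h_j\mathbf{v}_{2(k-\lceil h_j\rceil)}^\top\mathbf{u}_j$. Constant trace property (CTP): for every integer $k\ge k_{\min}$ there exist $a_k>0$ and a positive definite block-diagonal $\mathbf{P}_k=\mathrm{diag}(\mathbf{P}_{k,0},\dots,\mathbf{P}_{k,m})$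 (blocks of sizes $s(k),s(k-\lceil g_1\rceil),\dots,s(k-\lceil g_m\rceil)$) such that every $\mathbf{y}=(y_\alpha)_{\alpha\in\mathbb{N}^n_{2k}}$ with $\mathbf{M}_{k-\lceil h_j\rceil}(h_j\mathbf{y})=0$ ($j\in[l]$) and $y_{\mathbf{0}}=1$ satisfies $\mathrm{trace}(\mathbf{P}_k\mathbf{D}_k(\mathbf{y})\mathbf{P}_k)=a_k$, where $\mathbf{D}_k(\mathbf{y})=\mathrm{diag}(\mathbf{M}_k(\mathbf{y}),\mathbf{M}_{k-\lceil g_1\rceil}(g_1\mathbf{y}),\dots,\mathbf{M}_{k-\lceil g_m\rceil}(g_m\mathbf{y}))$, $\mathbf{M}_d(\mathbf{y})=(y_{\alpha+\beta})_{\alpha,\beta\in\mathbb{N}^n_d}$, $\mathbf{M}_d(q\mathbf{y})=(\sum_\gamma q_\gamma y_{\alpha+\beta+\gamma})_{\alpha,\beta\in\mathbb{N}^n_d}$. *)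

From HB Require Import structures.
From mathcomp Require Import all_boot all_order all_algebra.
From mathcomp Require Import mpoly.
Set Implicit Arguments. Unset Strict Implicit. Unset Printing Implicit Defensive.
Import Order.TTheory GRing.Theory Num.Theory.
Local Open Scope ring_scope.

Section POP.
Variables (R : rcfType) (n : nat).

(* deg p (with deg 0 := 0); msize p = 1 + total degree, 0 for p = 0 *)
Definition pdeg (p : {mpoly R[n]}) : nat := (msize p).-1.
Definition cdeg (p : {mpoly R[n]}) : nat := uphalf (pdeg p).

(* N^n_d = 'X_{1..n < d.+1};  s(d) = #N^n_d *)
Definition s (d : nat) : nat := #|{: 'X_{1..n < d.+1}}|.
(* the monomial exponent alpha indexing row/column i of a size-s(d) matrix *)
Definition mono (d : nat) (i : 'I_(s d)) : 'X_{1..n} :=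
  bmnm (@enum_val _ (pred_of_simpl predT) i).

Definition quadf (d : nat) (G : 'M[R]_(s d)) : {mpoly R[n]} :=
  \sum_(i < s d) \sum_(j < s d) (G i j)%:MP * 'X_[mono i] * 'X_[mono j].
Definition linf (d : nat) (u : 'cV[R]_(s d)) : {mpoly R[n]} :=
  \sum_(i < s d) (u i 0)%:MP * 'X_[mono i].

Definition sqnorm (T : {set 'I_n}) : {mpoly R[n]} := \sum_(t in T) 'X_t ^+ 2.

Definition locmx (d : nat) (q : {mpoly R[n]}) (y : 'X_{1..n} -> R) : 'M[R]_(s d) :=
  \matrix_(i, j) \sum_(c <- msupp q) q@_c * y (mono i + mono j + c)%MM.

End POP.
Arguments sqnorm {R n}.
Arguments quadf {R n d}.
Arguments linf {R n d}.
Arguments locmx {R n} d.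
Arguments mono {n d}.

Definition psdmx (R : rcfType) (N : nat) (A : 'M[R]_N) : Prop :=
  A^T = A /\ forall x : 'cV[R]_N, 0 <= (x^T *m A *m x) 0 0.
Definition pdmx (R : rcfType) (N : nat) (A : 'M[R]_N) : Prop :=
  A^T = A /\ forall x : 'cV[R]_N, x != 0 -> 0 < (x^T *m A *m x) 0 0.

Definition kmin (R : rcfType) (n m l : nat) (f : {mpoly R[n]})
  (g : 'I_m -> {mpoly R[n]}) (h : 'I_l -> {mpoly R[n]}) : nat :=
  maxn (cdeg f) (maxn (\max_(i < m) cdeg (g i)) (\max_(j < l) cdeg (h j))).

Definition LP_feasible (R : rcfType) (n m l : nat)
  (g : 'I_m -> {mpoly R[n]}) (h : 'I_l -> {mpoly R[n]}) (k : nat) : Prop :=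
  exists (xi : R) (G0 : 'M[R]_(s n k))
         (G : forall i : 'I_m, 'M[R]_(s n (k - cdeg (g i))))
         (u : forall j : 'I_l, 'cV[R]_(s n (2 * (k - cdeg (h j))))),
    [/\ is_diag_mx G0, psdmx (G0 - 1%:M),
        forall i, is_diag_mx (G i),
        forall i, psdmx (G i - 1%:M) &
        xi%:MP = quadf G0 + \sum_(i < m) g i * quadf (G i)
                 + \sum_(j < l) h j * linf (u j)].

(* g extended by g_0 := 1 (so that M_d(g_0 y) = M_d(y)) *)
Definition gext (R : rcfType) (n m : nat) (g : 'I_m -> {mpoly R[n]})
  (i : 'I_m.+1) : {mpoly R[n]} :=
  match unlift ord0 i with None => 1 | Some i' => g i' end.

Definition bsize (R : rcfType) (n m : nat) (g : 'I_m -> {mpoly R[n]}) (k : nat)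
  (i : 'I_m.+1) : nat := s n (k - cdeg (gext g i)).

Definition Dmx (R : rcfType) (n m : nat) (g : 'I_m -> {mpoly R[n]}) (k : nat)
  (y : 'X_{1..n} -> R) : 'M[R]_(\sum_i bsize g k i) :=
  mxdiag (fun i : 'I_m.+1 => locmx (k - cdeg (gext g i)) (gext g i) y).

Definition CTP (R : rcfType) (n m l : nat) (f : {mpoly R[n]})
  (g : 'I_m -> {mpoly R[n]}) (h : 'I_l -> {mpoly R[n]}) : Prop :=
  forall k : nat, (kmin f g h <= k)%N ->
  exists (a : R) (Pb : forall i : 'I_m.+1, 'M[R]_(bsize g k i)),
    0 < a /\ pdmx (mxdiag Pb) /\
    forall y : 'X_{1..n} -> R,
      (forall j : 'I_l, locmx (k - cdeg (h j)) (h j) y = 0) ->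
      y 0%MM = 1 ->
      \tr (mxdiag Pb *m Dmx g k y *m mxdiag Pb) = a.

From HB Require Import structures.
From mathcomp Require Import all_boot all_order all_algebra.
From mathcomp Require Import mpoly.
From mathcomp Require Import zify lra.
Import Order.TTheory GRing.Theory Num.Theory.
Local Open Scope ring_scope.

(* Take u_j = 0 and diagonal Gram matrices: it suffices to find xi > 0 and weights
   w_0, w_i >= 1 with
     xi = sum_{|a|<=k} w_0(a) x^2a + sum_i g_i s_i,   s_i = sum_{|b|<=k-ceil(g_i)} w_i(b) x^2b,
   for then P_k = diag(sqrt w) gives trace(P_k D_k(y) P_k) = L_y(xi) = xi.
   Every g_i = c_i +- ||x(U_i)||^2 has only square monomials, so the remainder
   xi - sum_i g_i s_i is automatically of the form sum_{|a|<=k} w_0(a) x^2a; what has to be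
   arranged is w_0 >= 1.  Give the lower-bound constraints weight 1 and the upper-bound ones
   weight M^(k-|a|), with M = 1 + sum_i |c_i| + mn.  Since the sets of the upper-bound
   constraints cover [n], for a <> 0 some -||x(U_i)||^2 s_i contributes -M^(k-|a|+1) to the
   coefficient of x^2a, which outweighs everything else; at a = 0 the choice
   xi = 1 + sum_i |c_i w_i(0)| does it. *)

Section SquareSupport.
Context {R : rcfType} {n : nat}.
Implicit Types (p q : {mpoly R[n]}) (a e : 'X_{1..n}) (D : nat).

Definition diag_sos D (c : 'X_{1..n} -> R) : {mpoly R[n]} :=
  \sum_(b : 'X_{1..n < D.+1}) c b *: 'X_[b + b].

Definition sq_supported D p :=
  forall e, e \in msupp p -> exists2 a, (mdeg a <= D)%N & e = (a + a)%MM.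

Lemma sq_supportedC D c : sq_supported D c%:MP.
Proof.
move=> e; rewrite msuppC; case: eqP => // _; rewrite mem_seq1 => /eqP ->.
by exists 0%MM; rewrite ?mdeg0 ?addm0.
Qed.

Lemma sq_supportedD {D p q} :
  sq_supported D p -> sq_supported D q -> sq_supported D (p + q).
Proof. by move=> Hp Hq e /msuppD_le; rewrite mem_cat => /orP[/Hp | /Hq]. Qed.

Lemma sq_supportedN {D p} : sq_supported D p -> sq_supported D (- p).
Proof. by move=> Hp e; rewrite (perm_mem (msuppN p)); apply: Hp. Qed.

Lemma sq_supportedZ {D} c {p} : sq_supported D p -> sq_supported D (c *: p).
Proof. by move=> Hp e /msuppZ_le /Hp. Qed.

Lemma sq_supported_sum {D} {I : Type} {r : seq I} {P : pred I} {F : I -> {mpoly R[n]}} :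
  (forall i, P i -> sq_supported D (F i)) -> sq_supported D (\sum_(i <- r | P i) F i).
Proof.
move=> HF; elim/big_rec: _ => [e|i p Pi Hp]; first by rewrite msupp0.
exact: sq_supportedD (HF i Pi) Hp.
Qed.

Lemma sq_supportedM {D D' p q} :
  sq_supported D p -> sq_supported D' q -> sq_supported (D + D') (p * q).
Proof.
move=> Hp Hq e /msuppM_le /allpairsP[[u v] /= [/Hp[a le_a ->] /Hq[b le_b ->] ->]].
exists (a + b)%MM; first by rewrite mdegD leq_add.
by apply/mnmP => i; rewrite !mnmDE; lia.
Qed.

Lemma sq_supported_diag_sos D c : sq_supported D (diag_sos D c).
Proof.
apply: sq_supported_sum => b _ e /msuppZ_le; rewrite msuppX mem_seq1 => /eqP ->.
by exists b => //; rewrite -ltnS bmdeg.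
Qed.

Lemma sq_supported_sqnorm (U : {set 'I_n}) : sq_supported 1 (sqnorm U).
Proof.
apply: sq_supported_sum => t _ e; rewrite expr2 -mpolyXD msuppX mem_seq1 => /eqP ->.
by exists U_(t)%MM; rewrite ?mdeg1.
Qed.

Lemma cdeg_le_sq_supported {D p} : sq_supported D p -> (cdeg p <= D)%N.
Proof.
move=> Hp; have : (msize p <= (D + D).+1)%N.
  rewrite msizeE; apply/bigmax_leqP_seq => e /Hp[a le_aD ->] _.
  by rewrite mdegD ltnS leq_add.
rewrite /cdeg /pdeg; lia.
Qed.

Lemma sq_supported_cdeg {D p} : sq_supported D p -> sq_supported (cdeg p) p.
Proof.
move=> Hp e e_p; have [a _ e_aa] := Hp e e_p; exists a => //.
move: (msize_mdeg_lt e_p); rewrite e_aa mdegD /cdeg /pdeg; lia.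
Qed.

Lemma cdeg1 : cdeg (1 : {mpoly R[n]}) = 0%N.
Proof. by rewrite /cdeg /pdeg msize1. Qed.

Lemma mcoeff_diag_sos D c e :
  (diag_sos D c)@_e = \sum_(b : 'X_{1..n < D.+1}) c b * ((b + b)%MM == e)%:R.
Proof. by rewrite /diag_sos raddf_sum /=; apply: eq_bigr => b _; rewrite mcoeffZ mcoeffX. Qed.

Lemma double_mnm_inj : injective (fun a : 'X_{1..n} => (a + a)%MM).
Proof. by move=> a b /mnmP eq_ab; apply/mnmP => i; have := eq_ab i; rewrite !mnmDE; lia. Qed.

Lemma mcoeff_diag_sos_double D c a :
  (diag_sos D c)@_(a + a) = if (mdeg a <= D)%N then c a else 0.
Proof.
rewrite mcoeff_diag_sos; case: leqP => [le_aD | lt_Da].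
  rewrite (bigD1 (BMultinom (le_aD : (mdeg a < D.+1)%N))) //= eqxx mulr1 big1 ?addr0 //.
  move=> b ne_b; rewrite (inj_eq double_mnm_inj).
  by case: eqP => [eq_ba|]; rewrite ?mulr0 //; case/eqP: ne_b; apply: val_inj.
apply: big1 => b _; rewrite (inj_eq double_mnm_inj).
by case: eqP => [eq_ba|]; rewrite ?mulr0 //; have := bmdeg b; rewrite eq_ba; lia.
Qed.

Lemma diag_sosE {D p} : sq_supported D p -> p = diag_sos D (fun a => p@_(a + a)).
Proof.
move=> Hp; apply/mpolyP => e; have [/Hp[a le_aD ->] | e_p] := boolP (e \in msupp p).
  by rewrite mcoeff_diag_sos_double le_aD.
rewrite memN_msupp_eq0 // mcoeff_diag_sos big1 // => b _.
by case: eqP => [->|]; rewrite ?mulr0 ?(memN_msupp_eq0 e_p) ?mul0r.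
Qed.

Lemma mcoeffMXE p m e :
  (p * 'X_[m])@_e = if (m <= e)%MM then p@_(e - m) else 0.
Proof.
case: ifP => [le_me | nle_me]; first by rewrite -{1}(submK le_me) addmC mcoeffMX.
apply: memN_msupp_eq0; rewrite (perm_mem (msuppMX p m)); apply/mapP => -[m' _ e_mm'].
by rewrite e_mm' lem_addr in nle_me.
Qed.

Lemma mcoeff_sqnormM_double (U : {set 'I_n}) p a :
  (sqnorm U * p)@_(a + a) =
  \sum_(t in U | (0 < a t)%N) p@_(a - U_(t) + (a - U_(t)))%MM.
Proof.
rewrite /sqnorm mulr_suml raddf_sum /= big_mkcondr /=; apply: eq_bigr => t _.
rewrite expr2 -mpolyXD mulrC mcoeffMXE.
have -> : (U_(t) + U_(t) <= a + a)%MM = (0 < a t)%N.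
  apply/mnm_lepP/idP => [/(_ t)|a_t i]; rewrite !mnmDE !mnm1E ?eqxx; first lia.
  by case: eqP => [<-|]; lia.
case: ifP => // _; congr (_@__); apply/mnmP => i.
by rewrite !(mnmBE, mnmDE, mnm1E); case: eqP => _; lia.
Qed.

End SquareSupport.

Section RieszFunctional.
Context {R : rcfType} {n : nat} (y : 'X_{1..n} -> R).
Implicit Types (p q : {mpoly R[n]}).

Definition riesz p : R := \sum_(e <- msupp p) p@_e * y e.

Lemma rieszE {p} {E : seq 'X_{1..n}} :
  uniq E -> {subset msupp p <= E} -> riesz p = \sum_(e <- E) p@_e * y e.
Proof.
move=> uE p_E; rewrite (bigID (mem (msupp p))) /= [X in _ + X]big1 ?addr0; last first.
  by move=> e /memN_msupp_eq0 ->; rewrite mul0r.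
rewrite -big_filter; apply: perm_big; apply: uniq_perm; rewrite ?filter_uniq ?msupp_uniq //.
by move=> e; rewrite mem_filter; case: (boolP (e \in msupp p)) => // /p_E ->.
Qed.

Lemma rieszD p q : riesz (p + q) = riesz p + riesz q.
Proof.
have uE : uniq (undup (msupp p ++ msupp q)) := undup_uniq _.
rewrite (rieszE uE); last by move=> e /msuppD_le; rewrite mem_undup.
rewrite (rieszE (p := p) uE); last by move=> e e_p; rewrite mem_undup mem_cat e_p.
rewrite (rieszE (p := q) uE); last by move=> e e_q; rewrite mem_undup mem_cat e_q orbT.
by rewrite -big_split; apply: eq_bigr => e _; rewrite mcoeffD mulrDl.
Qed.

Lemma riesz_sum (I : Type) (r : seq I) (P : pred I) (F : I -> {mpoly R[n]}) :
  riesz (\sum_(i <- r | P i) F i) = \sum_(i <- r | P i) riesz (F i).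
Proof. by apply: (big_morph riesz rieszD); rewrite /riesz msupp0 big_nil. Qed.

Lemma rieszZ c p : riesz (c *: p) = c * riesz p.
Proof.
rewrite (rieszE (msupp_uniq p)); last exact: msuppZ_le.
by rewrite mulr_sumr; apply: eq_bigr => e _; rewrite mcoeffZ mulrA.
Qed.

Lemma rieszC c : riesz c%:MP = c * y 0%MM.
Proof.
rewrite /riesz msuppC; case: eqP => [->|_]; first by rewrite big_nil mul0r.
by rewrite big_seq1 mcoeffC eqxx mulr1.
Qed.

Lemma rieszMX q m : riesz (q * 'X_[m]) = \sum_(e <- msupp q) q@_e * y (m + e).
Proof.
rewrite /riesz (perm_big _ (msuppMX q m)) big_map.
by apply: eq_bigr => e _; rewrite mcoeffMX.
Qed.

End RieszFunctional.

Section DiagonalMatrices.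
Context {R : rcfType}.

Lemma diag_mx_quad {N} (d : 'rV[R]_N) (x : 'cV[R]_N) :
  (x^T *m diag_mx d *m x) 0 0 = \sum_j d 0 j * x j 0 ^+ 2.
Proof. by rewrite mul_mx_diag mxE; apply: eq_bigr => j _; rewrite !mxE mulrAC -expr2 mulrC. Qed.

Lemma psdmx_diag {N} (d : 'rV[R]_N) : (forall j, 0 <= d 0 j) -> psdmx (diag_mx d).
Proof.
move=> d_ge0; split=> [|x]; first exact: tr_diag_mx.
by rewrite diag_mx_quad sumr_ge0 // => j _; rewrite mulr_ge0 ?sqr_ge0.
Qed.

Lemma pdmx_diag {N} (d : 'rV[R]_N) : (forall j, 0 < d 0 j) -> pdmx (diag_mx d).
Proof.
move=> d_gt0; split=> [|x x_neq0]; first exact: tr_diag_mx.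
have term_ge0 j : 0 <= d 0 j * x j 0 ^+ 2 by rewrite mulr_ge0 ?sqr_ge0 ?ltW.
rewrite diag_mx_quad lt_def sumr_ge0 // andbT; apply: contra x_neq0.
move=> /eqP /(psumr_eq0P (fun j _ => term_ge0 j)) x_eq0; apply/eqP/matrixP => j k.
by rewrite ord1 mxE; apply/eqP; have /eqP := x_eq0 j isT; rewrite mulf_eq0 sqrf_eq0 gt_eqF.
Qed.

Lemma mxtrace_diag_conj {N} (d : 'rV[R]_N) (A : 'M[R]_N) :
  \tr (diag_mx d *m A *m diag_mx d) = \sum_j d 0 j ^+ 2 * A j j.
Proof. by apply: eq_bigr => j _; rewrite mul_mx_diag mul_diag_mx !mxE mulrAC expr2. Qed.

Lemma mul_mxdiag {p : nat} {p_ : 'I_p -> nat} (A B : forall i, 'M[R]_(p_ i)) :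
  mxdiag A *m mxdiag B = mxdiag (fun i => A i *m B i).
Proof.
rewrite {2}/mxdiag mul_mxdiag_mxblock /mxdiag; apply/eq_mxblock => i j.
by case: eqVneq => [<-|]; rewrite ?conform_mx_id ?mulmx0.
Qed.

End DiagonalMatrices.

Section MonomialMatrices.
Context {R : rcfType} {n : nat}.

Definition diag_mono D (c : 'X_{1..n} -> R) : 'M[R]_(s n D) :=
  diag_mx (\row_i c (mono i)).

Lemma mdeg_mono {D} (i : 'I_(s n D)) : (mdeg (mono i) <= D)%N.
Proof. by rewrite -ltnS bmdeg. Qed.

Lemma sum_mono {V : nmodType} D (F : 'X_{1..n} -> V) :
  \sum_(i < s n D) F (mono i) = \sum_(b : 'X_{1..n < D.+1}) F b.
Proof.
by rewrite [RHS](eq_bigl (mem (pred_of_simpl predT))) // [RHS]big_enum_val.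
Qed.

Lemma quadf_diag_mono D c : quadf (diag_mono D c) = diag_sos D c.
Proof.
rewrite /quadf /diag_sos -(sum_mono D (fun b => c b *: 'X_[b + b])).
apply: eq_bigr => i _; rewrite (bigD1 i) //= big1 ?addr0 => [|j /negbTE ne_ji].
  by rewrite !mxE eqxx mulr1n -mulrA -mpolyXD mul_mpolyC.
by rewrite !mxE eq_sym ne_ji mulr0n mpolyC0 !mul0r.
Qed.

Lemma psdmx_diag_mono_sub1 {D c} :
  (forall a, (mdeg a <= D)%N -> 1 <= c a) -> psdmx (diag_mono D c - 1%:M).
Proof.
move=> c_ge1; have -> : diag_mono D c - 1%:M = diag_mono D (fun a => c a - 1).
  by apply/matrixP => i j; rewrite !mxE; case: eqP => _; rewrite ?mulr1n ?mulr0n ?subr0.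
by apply: psdmx_diag => j; rewrite mxE subr_ge0 c_ge1 ?mdeg_mono.
Qed.

Lemma mxtrace_diag_mono_locmx {D} {w : 'X_{1..n} -> R} q y :
  (forall a, (mdeg a <= D)%N -> 0 <= w a) ->
  \tr (diag_mono D (fun a => Num.sqrt (w a)) *m locmx D q y *m
       diag_mono D (fun a => Num.sqrt (w a))) = riesz y (q * diag_sos D w).
Proof.
move=> w_ge0; rewrite mxtrace_diag_conj /diag_sos mulr_sumr riesz_sum.
under eq_bigr do rewrite !mxE sqr_sqrtr ?w_ge0 ?mdeg_mono //.
rewrite (sum_mono D (fun b => w b * \sum_(e <- msupp q) q@_e * y (b + b + e)%MM)).
by apply: eq_bigr => b _; rewrite -scalerAr rieszZ rieszMX.
Qed.

End MonomialMatrices.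

Section DiagonalCertificate.
Context {R : rcfType} {n m : nat} (g : 'I_m -> {mpoly R[n]}).

Definition diag_certificate (k : nat) : Prop :=
  exists (xi : R) (w0 : 'X_{1..n} -> R) (w : 'I_m -> 'X_{1..n} -> R),
  [/\ 0 < xi, forall a, (mdeg a <= k)%N -> 1 <= w0 a,
      forall i a, (mdeg a <= k - cdeg (g i))%N -> 1 <= w i a &
      xi%:MP = diag_sos k w0 + \sum_i g i * diag_sos (k - cdeg (g i)) (w i)].

Lemma LP_feasible_diag_certificate {l} (h : 'I_l -> {mpoly R[n]}) k :
  diag_certificate k -> LP_feasible g h k.
Proof.
case=> xi [w0] [w] [_ w0_ge1 w_ge1 xiE].
exists xi, (diag_mono k w0), (fun i => diag_mono _ (w i)), (fun=> 0); split.
- exact: diag_mx_is_diag.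
- exact: psdmx_diag_mono_sub1.
- by move=> i; apply: diag_mx_is_diag.
- by move=> i; apply/psdmx_diag_mono_sub1/w_ge1.
rewrite quadf_diag_mono xiE; under [in RHS]eq_bigr do rewrite quadf_diag_mono.
rewrite [X in _ = _ + X]big1 ?addr0 // => j _.
by rewrite /linf big1 ?mulr0 // => i _; rewrite mxE mpolyC0 !mul0r.
Qed.

Lemma CTP_diag_certificate {l} f (h : 'I_l -> {mpoly R[n]}) :
  (forall k, (kmin f g h <= k)%N -> diag_certificate k) -> CTP f g h.
Proof.
move=> certif k /certif[xi [w0] [w] [xi_gt0 w0_ge1 w_ge1 xiE]].
pose wext (i : 'I_m.+1) := if unlift ord0 i is Some i' then w i' else w0.
have wext_ge1 i a : (mdeg a <= k - cdeg (gext g i))%N -> 1 <= wext i a.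
  rewrite /wext /gext; case: unlift => [i'|]; first exact: w_ge1.
  by rewrite cdeg1 subn0; apply: w0_ge1.
have wext_ge0 i a : (mdeg a <= k - cdeg (gext g i))%N -> 0 <= wext i a.
  by move=> /wext_ge1; apply: le_trans.
exists xi, (fun i => diag_mono _ (fun a => Num.sqrt (wext i a))); do 2!split => //.
  rewrite -diag_mxrow; apply: pdmx_diag => j; rewrite !mxE sqrtr_gt0.
  exact: lt_le_trans ltr01 (wext_ge1 _ _ (mdeg_mono _)).
move=> y _ y0; rewrite /Dmx !mul_mxdiag mxtrace_mxdiag.
under eq_bigr => i _ do rewrite (mxtrace_diag_mono_locmx (gext g i) y (wext_ge0 i)).
rewrite -riesz_sum big_ord_recl /gext /wext unlift_none cdeg1 subn0 mul1r.
under eq_bigr do rewrite liftK.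
by rewrite -xiE rieszC y0 mulr1.
Qed.

End DiagonalCertificate.

Definition ball_sign {R : rcfType} {m : nat} (lower : 'I_m -> bool) (i : 'I_m) : R :=
  if lower i then 1 else -1.

Section BallCertificate.
Context {R : rcfType} {n m : nat} {g : 'I_m -> {mpoly R[n]}} {k : nat}.
Context {lower : 'I_m -> bool} {c : 'I_m -> R} {U : 'I_m -> {set 'I_n}}.
Implicit Types (i : 'I_m) (t : 'I_n) (a : 'X_{1..n}).

Hypothesis g_ball : forall i, g i = (c i)%:MP + ball_sign lower i *: sqnorm (U i).
Hypothesis cdeg_g_le : forall i, (cdeg (g i) <= k)%N.
Hypothesis upper_cover : forall t, exists2 i, ~~ lower i & t \in U i.

Definition ball_base : R := 1 + \sum_i `|c i| + (m * n)%:R.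

Definition ball_weight i (a : 'X_{1..n}) : R :=
  if lower i then 1 else ball_base ^+ (k - mdeg a).

Local Notation sos i := (diag_sos (k - cdeg (g i)) (ball_weight i)).

Definition ball_xi : R := 1 + \sum_i `|c i * ball_weight i 0%MM|.

Definition ball_remainder : {mpoly R[n]} := ball_xi%:MP - \sum_i g i * sos i.

Lemma sq_supported_ball i : sq_supported 1 (g i).
Proof.
rewrite g_ball; apply: sq_supportedD; first exact: sq_supportedC.
exact/sq_supportedZ/sq_supported_sqnorm.
Qed.

Lemma sq_supported_ball_remainder : sq_supported k ball_remainder.
Proof.
apply/sq_supportedD/sq_supportedN/sq_supported_sum => [|i _]; first exact: sq_supportedC.
have := sq_supportedM (sq_supported_cdeg (sq_supported_ball i))
                      (sq_supported_diag_sos (k - cdeg (g i)) (ball_weight i)).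
by rewrite subnKC.
Qed.

Lemma ball_base_ge1 : 1 <= ball_base.
Proof. by rewrite /ball_base -addrA lerDl addr_ge0 // sumr_ge0. Qed.

Lemma ball_weight_ge1 i a : 1 <= ball_weight i a.
Proof. by rewrite /ball_weight; case: lower => //; rewrite exprn_ege1 ?ball_base_ge1. Qed.

Lemma ball_weight_le i a : ball_weight i a <= ball_base ^+ (k - mdeg a).
Proof. by rewrite /ball_weight; case: lower; rewrite ?exprn_ege1 ?ball_base_ge1. Qed.

Lemma mcoeff_ball_sos_double i a :
  (g i * sos i)@_(a + a) =
  c i * (if (mdeg a <= k - cdeg (g i))%N then ball_weight i a else 0)
  + ball_sign lower i * (sqnorm (U i) * sos i)@_(a + a).
Proof.
by rewrite {1}g_ball mulrDl mcoeffD mul_mpolyC mcoeffZ -scalerAl mcoeffZ mcoeff_diag_sos_double.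
Qed.

Lemma mcoeff_sqnorm_sos_ge0 i a : 0 <= (sqnorm (U i) * sos i)@_(a + a).
Proof.
rewrite mcoeff_sqnormM_double sumr_ge0 // => t _.
by rewrite mcoeff_diag_sos_double; case: ifP => // _; apply: le_trans (ball_weight_ge1 _ _).
Qed.

Lemma mcoeff_sqnorm_sos_lower_le i a : lower i -> (sqnorm (U i) * sos i)@_(a + a) <= n%:R.
Proof.
move=> low; apply: (@le_trans _ _ (\sum_(t < n) 1)); last by rewrite sumr_const card_ord.
rewrite mcoeff_sqnormM_double big_mkcond /=; apply: ler_sum => t _.
case: ifP => _; rewrite ?ler01 // mcoeff_diag_sos_double /ball_weight low.
by case: ifP; rewrite ?ler01.
Qed.

Lemma mcoeff_sqnorm_sos_upper_ge {i t a} :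
  ~~ lower i -> t \in U i -> (0 < a t)%N -> (mdeg a <= k)%N ->
  ball_base * ball_base ^+ (k - mdeg a) <= (sqnorm (U i) * sos i)@_(a + a).
Proof.
move=> upp t_U a_t le_ak; rewrite mcoeff_sqnormM_double (bigD1 t) ?t_U ?a_t //=.
rewrite -[X in X <= _]addr0 lerD ?sumr_ge0 // => [|t' _]; last first.
  by rewrite mcoeff_diag_sos_double; case: ifP => // _; apply: le_trans (ball_weight_ge1 _ _).
have aE : (a - U_(t) + U_(t))%MM = a.
  by apply: submK; apply/mnm_lepP => j; rewrite mnm1E; case: eqP => // <-.
have := congr1 mdeg aE; rewrite mdegD mdeg1 => mdegE.
have := cdeg_le_sq_supported (sq_supported_ball i).
rewrite mcoeff_diag_sos_double /ball_weight (negbTE upp) => cdeg_le1.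
rewrite ifT; last lia.
by rewrite (_ : (k - mdeg (a - U_(t)))%N = (k - mdeg a).+1) ?exprS //; lia.
Qed.

Lemma ball_remainder_coef0 : 1 <= ball_remainder@_(0 + 0)%MM.
Proof.
have sqnorm_sos0 i : (sqnorm (U i) * sos i)@_(0 + 0)%MM = 0.
  by rewrite mcoeff_sqnormM_double big1 // => t /andP[_]; rewrite mnm0E.
rewrite /ball_remainder mcoeffB raddf_sum /=.
under eq_bigr do rewrite mcoeff_ball_sos_double sqnorm_sos0 mulr0 addr0 mdeg0 leq0n /=.
rewrite mcoeffC addm0 eqxx mulr1 /ball_xi -addrA lerDl subr_ge0.
by apply: ler_sum => i _; apply: ler_norm.
Qed.

Lemma ball_const_part_le a :
  \sum_i c i * (if (mdeg a <= k - cdeg (g i))%N then ball_weight i a else 0)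
  <= (\sum_i `|c i|) * ball_base ^+ (k - mdeg a).
Proof.
rewrite mulr_suml; apply: ler_sum => i _; apply: le_trans (ler_norm _) _.
rewrite normrM ler_wpM2l //; case: ifP => _.
  by rewrite ger0_norm ?ball_weight_le // (le_trans ler01 (ball_weight_ge1 _ _)).
by rewrite normr0 exprn_ge0 // (le_trans ler01 ball_base_ge1).
Qed.

Lemma ball_sign_part_le {a} : a != 0%MM -> (mdeg a <= k)%N ->
  \sum_i ball_sign lower i * (sqnorm (U i) * sos i)@_(a + a)
  <= (m * n)%:R - ball_base * ball_base ^+ (k - mdeg a).
Proof.
move=> a_neq0 le_ak.
have [t a_t] : exists t, (0 < a t)%N.
  case: (pickP (fun t => 0 < a t)%N) => [t a_t | a0]; first by exists t.
  by case/eqP: a_neq0; apply/mnmP => t; rewrite mnm0E; move: (a0 t); lia.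
have [i0 upp t_U] := upper_cover t.
have term_le i : ball_sign lower i * (sqnorm (U i) * sos i)@_(a + a) <= n%:R.
  rewrite /ball_sign; case: ifP => [low | _].
    by rewrite mul1r mcoeff_sqnorm_sos_lower_le.
  by rewrite mulN1r (le_trans _ (ler0n _ n)) // oppr_le0 mcoeff_sqnorm_sos_ge0.
have rest_le :
    \sum_(i | i != i0) ball_sign lower i * (sqnorm (U i) * sos i)@_(a + a) <= (m * n)%:R.
  have -> : (m * n)%:R = \sum_(i < m) (n%:R : R).
    by rewrite sumr_const card_ord natrM mulr_natl.
  rewrite [X in _ <= X](bigD1 i0) //=.
  by rewrite -[X in X <= _]add0r lerD // ler_sum.
have i0_ge := mcoeff_sqnorm_sos_upper_ge upp t_U a_t le_ak.
rewrite (bigD1 i0) //= {1}/ball_sign (negbTE upp) mulN1r; lra.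
Qed.

Lemma ball_remainder_coef_ge1 a : (mdeg a <= k)%N -> 1 <= ball_remainder@_(a + a).
Proof.
move=> le_ak; have [-> | a_neq0] := eqVneq a 0%MM; first exact: ball_remainder_coef0.
rewrite /ball_remainder mcoeffB mcoeffC mnmD_eq0 andbb (negbTE a_neq0) mulr0 sub0r.
rewrite raddf_sum /=; under eq_bigr do rewrite mcoeff_ball_sos_double.
rewrite big_split /=; have := ball_const_part_le a; have := ball_sign_part_le a_neq0 le_ak.
have : 1 <= ball_base ^+ (k - mdeg a) by rewrite exprn_ege1 ?ball_base_ge1.
have : 0 <= \sum_i `|c i| by rewrite sumr_ge0.
have : 0 <= (m * n)%:R :> R by [].
(* (1 + W + mn) X - W X - mn = X + mn (X - 1) >= 1 *)
rewrite /ball_base; set X := (_ ^+ _); set W := \sum_i _; nra.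
Qed.

Lemma ball_diag_certificate : diag_certificate g k.
Proof.
exists ball_xi, (fun a => ball_remainder@_(a + a)), ball_weight; split.
- by rewrite /ball_xi ltr_wpDr ?sumr_ge0.
- exact: ball_remainder_coef_ge1.
- by move=> i a _; apply: ball_weight_ge1.
- by rewrite -(diag_sosE sq_supported_ball_remainder) /ball_remainder subrK.
Qed.

End BallCertificate.

Lemma cdeg_le_kmin {R : rcfType} {n m l : nat} (f : {mpoly R[n]})
  (g : 'I_m -> {mpoly R[n]}) (h : 'I_l -> {mpoly R[n]}) i :
  (cdeg (g i) <= kmin f g h)%N.
Proof. by rewrite /kmin !leq_max (leq_bigmax (F := fun i => cdeg (g i))) orbT. Qed.

Lemma ball_form_of_annuli_and_balls {R : rcfType} {n m : nat}
  {g : 'I_m -> {mpoly R[n]}} {r : nat} {Rlo Rhi : nat -> R} {T : nat -> {set 'I_n}} :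
  (2 * r <= m)%N ->
  \bigcup_(i < m | (i < r)%N || (2 * r <= i)%N) (T i : {set 'I_n}) = [set: 'I_n] ->
  (forall i : 'I_m, (i < r)%N -> g i = sqnorm (T i) - (Rlo i)%:MP) ->
  (forall i : 'I_m, (r <= i < 2 * r)%N ->
     g i = (Rhi (i - r)%N)%:MP - sqnorm (T (i - r)%N)) ->
  (forall j : 'I_m, (2 * r <= j)%N -> g j = (Rhi j)%:MP - sqnorm (T j)) ->
  exists (lower : 'I_m -> bool) (c : 'I_m -> R) (U : 'I_m -> {set 'I_n}),
    (forall i, g i = (c i)%:MP + ball_sign lower i *: sqnorm (U i)) /\
    (forall t, exists2 i, ~~ lower i & t \in U i).
Proof.
move=> le_2r_m cover g_lo g_mid g_up.
exists (fun i => i < r)%N.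
exists (fun i => if (i < r)%N then - Rlo i else if (i < 2 * r)%N then Rhi (i - r)%N else Rhi i).
exists (fun i => if (i < r)%N then T i else if (i < 2 * r)%N then T (i - r)%N else T i).
split=> [i | t]; rewrite /ball_sign.
  case: (ltnP i r) => [lt_ir | le_ri]; first by rewrite g_lo // scale1r mpolyCN addrC.
  case: ltnP => [lt_i2r | le_2ri]; rewrite scaleN1r; first by rewrite g_mid //; lia.
  by rewrite g_up.
move: (in_setT t); rewrite -cover => /bigcupP[i /orP[lt_ir | le_2ri] t_T].
  have [lt_irm le_r lt_2r] : [/\ (i + r < m)%N, (r <= i + r)%N & (i + r < 2 * r)%N].
    by split; lia.
  by exists (Ordinal lt_irm); rewrite /= ltnNge le_r //= lt_2r addnK.
have le_ri : (r <= i)%N by lia.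
by exists i; rewrite ltnNge le_ri //= ltnNge le_2ri.
Qed.

Theorem proposition1 (R : rcfType) (n m l : nat) (f : {mpoly R[n]})
  (g : 'I_m -> {mpoly R[n]}) (h : 'I_l -> {mpoly R[n]})
  (r : nat) (Rlo Rhi : nat -> R) (T : nat -> {set 'I_n}) :
  (2 * r <= m)%N ->
  (forall i : nat, (i < r)%N -> 0 < Rlo i /\ Rlo i < Rhi i) ->
  (forall j : nat, (2 * r <= j < m)%N -> 0 < Rhi j) ->
  \bigcup_(i < m | (i < r)%N || (2 * r <= i)%N) (T i : {set 'I_n}) = [set: 'I_n] ->
  (forall i : 'I_m, (i < r)%N -> g i = sqnorm (T i) - (Rlo i)%:MP) ->
  (forall i : 'I_m, (r <= i < 2 * r)%N ->
     g i = (Rhi (i - r)%N)%:MP - sqnorm (T (i - r)%N)) ->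
  (forall j : 'I_m, (2 * r <= j)%N -> g j = (Rhi j)%:MP - sqnorm (T j)) ->
  (forall k : nat, (kmin f g h <= k)%N -> LP_feasible g h k)
  /\ CTP f g h.
Proof.
move=> le_2r_m _ _ cover g_lo g_mid g_up.
have [lower [c [U [g_ball upper_cover]]]] :=
  ball_form_of_annuli_and_balls le_2r_m cover g_lo g_mid g_up.
have certif k : (kmin f g h <= k)%N -> diag_certificate g k.
  move=> le_k; apply: (ball_diag_certificate g_ball _ upper_cover) => i.
  exact: leq_trans (cdeg_le_kmin f g h i) le_k.
split; last exact: CTP_diag_certificate.
by move=> k /certif; apply: LP_feasible_diag_certificate.
Qed.
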